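(* A replicated system $\mathcal P$ satisfies a stable termination property $\Pi$ if and only if $\mathcal P$ has a stage graph for $\Pi$.
   Context: A replicated system of arity $n$ is $\mathcal P=(Q,T)$ with $Q$ finite and $T\subseteq\bigcup_{k=0}^n Q^{(k)}\times Q^{(k)}$ ($Q^{(k)}$: multisets over $Q$ of size $k$) containing all silent transitions $(\vec x,\vec x)$. For $t=(\vec x,\vec y)$: $\mathrm{pre}(t)=\vec x$, $\Delta(t)=\vec y-\vec x$. Configurations are $C\in\mathbb N^Q$; $t$ is enabled at $C$ if $C\ge\mathrm{pre}(t)$ and then $C\xrightarrow{t}C+\Delta(t)$; $\to$ is the union over $t$, $\xrightarrow{*}$ its reflexive-transitive closure. A run is an infinite sequence $C_0t_1C_1\cdots$ of steps; it is fair if for every possible step $C\xrightarrow{t}C'$, if $C$ occurs infinitely often then the segment $C\,t\,C'$ occurs infinitely often. Presburger formulas over $Q$ define sets $[\![\phi]\!]\subseteq\mathbb N^Q$. A stable termination property is $\Pi=(\phi_{pre},\{\phi^1_{post},\dots,\phi^k_{post}\})$ with all components Presburger formulas over $Q$; $\mathcal P$ satisfies $\Pi$ if every fair run starting at a configuration of $[\![\phi_{pre}]\!]$ satisfies $\Diamond\bigvee_{i=1}^k\Box\phi^i_{post}$ (i.e.\ from some point on all configurations satisfy $\phi^i_{post}$ for some fixed $i$). A set $\mathcal C$ is inductive if $C\in\mathcal C$, $C\to C'$ imply $C'\in\mathcal C$. A certificate for $\mathcal C\leadsto\mathcal C'$ is $f:\mathcal C\to\mathbb N$ such that every $C\in\mathcal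 C\setminus\mathcal C'$ has an execution $C\xrightarrow{*}D$, $D\in\mathcal C$, $f(C)>f(D)$. A set $\mathcal C$ satisfies $\phi^i_{post}$ if every configuration of $\mathcal C$ satisfies it (for inductive $\mathcal C$ this is the same as satisfying $\Box\phi^i_{post}$). A stage graph of $\mathcal P$ for $\Pi$ is a finite directed acyclic graph whose nodes (stages) are sets of configurations such that: (1) every stage is inductive; (2) every configuration of $[\![\phi_{pre}]\!]$ belongs to some stage; (3) for every non-terminal stage $\mathcal C$ with successors $\mathcal C_1,\dots,\mathcal C_n$ there is a certificate for $\mathcal C\leadsto(\mathcal C_1\cup\dots\cup\mathcal C_n)$; (4) every terminal stage satisfies $\phi^i_{post}$ for some $i$. *)

From mathcomp Require Import all_boot.
From Stdlib Require Import Relations.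
From Stdlib Require Lists.List.
Set Implicit Arguments. Unset Strict Implicit. Unset Printing Implicit Defensive.

Definition conf (Q : finType) := {ffun Q -> nat}.
Definition msize (Q : finType) (x : conf Q) : nat := \sum_(q : Q) x q.

Definition transition (Q : finType) := (conf Q * conf Q)%type.
Definition pre (Q : finType) (t : transition Q) : conf Q := t.1.
Definition post (Q : finType) (t : transition Q) : conf Q := t.2.

Record replicated_system (n : nat) := RepSys {
  rs_Q : finType;
  rs_T : transition rs_Q -> Prop;
  rs_T_size : forall t, rs_T t ->
     msize (pre t) <= n /\ msize (post t) = msize (pre t);
  rs_T_silent : forall x : conf rs_Q, msize x <= n -> rs_T (x, x)
}.

Section Semantics.
Variables (n : nat) (P : replicated_system n).
Local Notation Q := (rs_Q P).

Definition enabled (t : transition Q) (C : conf Q) : Prop :=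
  forall q, pre t q <= C q.

Definition step (C : conf Q) (t : transition Q) (C' : conf Q) : Prop :=
  @rs_T _ P t /\ enabled t C /\ forall q, C' q = C q - pre t q + post t q.

Definition step_rel (C C' : conf Q) : Prop := exists t, step C t C'.
Definition reach : relation (conf Q) := clos_refl_trans _ step_rel.

Record run := Run {
  run_conf : nat -> conf Q;
  run_trans : nat -> transition Q;
  run_steps : forall i, step (run_conf i) (run_trans i) (run_conf i.+1)
}.

Definition inf_often (p : nat -> Prop) : Prop := forall N, exists i, N <= i /\ p i.

Definition fair (r : run) : Prop :=
  forall C t C', step C t C' ->
    inf_often (fun i => run_conf r i = C) ->
    inf_often (fun i => [/\ run_conf r i = C, run_trans r i = t
                          & run_conf r i.+1 = C']).
End Semantics.
Arguments run {n} P.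
Arguments fair {n P} r.

(* Free variables are the states q : Q (interpreted as C q); bound variables
   are de Bruijn indices ranging over N. *)
Inductive pterm (Q : Type) :=
| PVar of Q
| PBnd of nat
| PConst of nat
| PAdd of pterm Q & pterm Q
| PScale of nat & pterm Q.

Inductive pform (Q : Type) :=
| PLe of pterm Q & pterm Q
| PEq of pterm Q & pterm Q
| PTrue
| PNot of pform Q
| PAnd of pform Q & pform Q
| POr of pform Q & pform Q
| PEx of pform Q
| PAll of pform Q.

Fixpoint teval (Q : finType) (C : conf Q) (e : nat -> nat) (t : pterm Q) : nat :=
  match t with
  | PVar q => C q
  | PBnd i => e i
  | PConst c => c
  | PAdd t1 t2 => teval C e t1 + teval C e t2
  | PScale k t1 => k * teval C e t1
  end.

Definition scons (v : nat) (e : nat -> nat) : nat -> nat :=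
  fun i => if i is j.+1 then e j else v.

Fixpoint fholds (Q : finType) (C : conf Q) (e : nat -> nat) (f : pform Q) : Prop :=
  match f with
  | PLe t1 t2 => teval C e t1 <= teval C e t2
  | PEq t1 t2 => teval C e t1 = teval C e t2
  | PTrue => True
  | PNot g => ~ fholds C e g
  | PAnd g h => fholds C e g /\ fholds C e h
  | POr g h => fholds C e g \/ fholds C e h
  | PEx g => exists v, fholds C (scons v e) g
  | PAll g => forall v, fholds C (scons v e) g
  end.

(* [[phi]] : the set of configurations satisfying phi (bound vars start at 0,
   irrelevant for closed formulas). *)
Definition psem (Q : finType) (phi : pform Q) (C : conf Q) : Prop :=
  fholds C (fun _ => 0) phi.

Record stable_term_prop (Q : finType) := STP {
  phi_pre : pform Q;
  phi_posts : seq (pform Q)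
}.

Definition satisfies (n : nat) (P : replicated_system n)
    (Pi : stable_term_prop (rs_Q P)) : Prop :=
  forall r : run P, fair r -> psem (phi_pre Pi) (run_conf r 0) ->
    exists N, exists2 phi, Stdlib.Lists.List.In phi (phi_posts Pi) &
      forall m, N <= m -> psem phi (run_conf r m).

Section Stages.
Variables (n : nat) (P : replicated_system n).
Local Notation Q := (rs_Q P).

Definition inductive (S : conf Q -> Prop) : Prop :=
  forall C C', S C -> step_rel C C' -> S C'.

Definition certificate (S S' : conf Q -> Prop) (f : conf Q -> nat) : Prop :=
  forall C, S C -> ~ S' C ->
    exists D, [/\ reach C D, S D & f D < f C].

Definition set_satisfies (S : conf Q -> Prop) (phi : pform Q) : Prop :=
  forall C, S C -> psem phi C.

Local Unset Implicit Arguments.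
Record stage_graph := StageGraph {
  sg_size : nat;
  sg_stage : 'I_sg_size -> conf Q -> Prop;
  sg_edge : 'I_sg_size -> 'I_sg_size -> Prop
}.

Local Set Implicit Arguments.
Definition acyclic (m : nat) (E : 'I_m -> 'I_m -> Prop) : Prop :=
  forall i, ~ clos_trans _ E i i.

Definition is_stage_graph (Pi : stable_term_prop Q) (G : stage_graph) : Prop :=
  [/\ acyclic (sg_edge G),
      (forall i, inductive (sg_stage G i)),
      (forall C, psem (phi_pre Pi) C -> exists i, sg_stage G i C),
      (forall i, (exists j, sg_edge G i j) ->
          exists f, certificate (sg_stage G i)
                      (fun C => exists j, sg_edge G i j /\ sg_stage G j C) f)
    & (forall i, (forall j, ~ sg_edge G i j) ->
          exists2 phi, Stdlib.Lists.List.In phi (phi_posts Pi) & set_satisfies (sg_stage G i) phi)].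

Definition has_stage_graph (Pi : stable_term_prop Q) : Prop :=
  exists G, is_stage_graph Pi G.
End Stages.

From mathcomp Require Import all_boot.
From Stdlib Require Import Relations Classical ClassicalEpsilon Lia.
From mathcomp Require Import zify.
Set Implicit Arguments. Unset Strict Implicit. Unset Printing Implicit Defensive.

(* Both directions rest on one finiteness fact: transitions
   preserve the number of agents, so only finitely many configurations are
   reachable from a given one.
   - Soundness: a fair run staying in an inductive stage with a certificate
     must leave it (take a configuration visited infinitely often with minimal
     certificate value; fairness then also visits its smaller successor).
     Since the graph is acyclic, the run ends in a terminal stage, which
     satisfies a postcondition.
   - Completeness: from every configuration some bottom configuration B is
     reachable (everything reachable from B can return to B).  A scheduler
     that repeatedly walks to and fires every step infinitely often builds a
     fair run through B; it then visits every configuration reachable from B,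
     so some postcondition holds on all of them.  The stage graph has a root
     stage (configurations reachable from the precondition) pointing to one
     stage per postcondition phi (reachable configurations all of whose
     successors satisfy phi); the distance to these stages is a certificate. *)

(* Classical decision of a proposition, to minimise over arbitrary properties. *)
Definition pdec (A : Prop) : bool :=
  if excluded_middle_informative A then true else false.

Lemma pdecP (A : Prop) : reflect A (pdec A).
Proof. by rewrite /pdec; case: excluded_middle_informative => h; constructor. Qed.

Lemma inf_often_value (T : finType) (g : nat -> T) :
  exists x, inf_often (fun i => g i = x).
Proof.
apply: NNPP => none.
have bound x : exists N, forall i, N <= i -> g i <> x.
  apply: NNPP => hx; apply: none; exists x => N; apply: NNPP => hN.
  by apply: hx; exists N => i hi gi; apply: hN; exists i.
pose N x := proj1_sig (constructive_indefinite_description _ (bound x)).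
have NP x : forall i, N x <= i -> g i <> x.
  exact: proj2_sig (constructive_indefinite_description _ (bound x)).
pose M := \max_(x : T) N x.
by apply: (NP (g M) M) => //; apply: leq_bigmax.
Qed.

Section Reachability.
Variables (n : nat) (P : replicated_system n).
Local Notation Q := (rs_Q P).
Local Notation cfg := (conf Q).

Definition silent : transition Q := ([ffun => 0], [ffun => 0]).

Lemma silent_step (C : cfg) : step C silent C.
Proof.
split; first by apply: rs_T_silent; rewrite /msize big1 // => q _; rewrite ffunE.
split; first by move=> q; rewrite /pre /= ffunE.
by move=> q; rewrite /pre /post /= !ffunE subn0 addn0.
Qed.

Lemma step_msize (C C' : cfg) t : step C t C' -> msize C' = msize C.
Proof.
case=> [hT [hen eqC']]; have [_ hsize] := rs_T_size hT.
rewrite /msize in hsize *.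
rewrite (eq_bigr (fun q => C q - pre t q + post t q)) // big_split /=.
have <- : \sum_q (C q - pre t q) + \sum_q pre t q = \sum_q C q.
  by rewrite -big_split /=; apply: eq_bigr => q _; rewrite subnK.
by rewrite hsize.
Qed.

Lemma reach_msize (C D : cfg) : reach C D -> msize D = msize C.
Proof.
elim=> [x y [t h]|//|x y z _ h1 _ h2]; first exact: step_msize h.
by rewrite h2.
Qed.

(* Configurations with s agents embed into the finite type Q -> 'I_s.+1. *)
Definition encode (s : nat) (C : cfg) : {ffun Q -> 'I_s.+1} :=
  [ffun q => inord (C q)].
Definition decode (s : nat) (x : {ffun Q -> 'I_s.+1}) : cfg :=
  [ffun q => nat_of_ord (x q)].

Lemma decode_encode s (C : cfg) : msize C = s -> decode (encode s C) = C.
Proof.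
move=> <-; apply/ffunP => q; rewrite !ffunE inordK // ltnS.
by rewrite /msize (bigD1 q) //= leq_addr.
Qed.

Fixpoint reach_in (k : nat) (C D : cfg) : Prop :=
  if k is k'.+1 then exists E, step_rel C E /\ reach_in k' E D else C = D.

Lemma reach_in_cat a b (C E D : cfg) :
  reach_in a C E -> reach_in b E D -> reach_in (a + b) C D.
Proof.
elim: a C => [|a IH] C /=; first by move=> ->.
by move=> [F [hCF hF]] hE; exists F; split => //; apply: IH hF hE.
Qed.

Lemma reachP (C D : cfg) : reach C D <-> exists k, reach_in k C D.
Proof.
split.
  elim=> [x y h|x|x y z _ [a ha] _ [b hb]]; first by exists 1, y.
  - by exists 0.
  - by exists (a + b); apply: reach_in_cat ha hb.
case=> k; elim: k C => [|k IH] C /=; first by move=> ->; apply: rt_refl.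
by move=> [E [hCE hE]]; apply: rt_trans (rt_step _ _ _ _ hCE) (IH _ hE).
Qed.

(* The length of a shortest execution from C into U (0 if U is unreachable). *)
Definition dist_to (U : cfg -> Prop) (C : cfg) : nat :=
  match excluded_middle_informative
          (exists k, pdec (exists D, reach_in k C D /\ U D)) with
  | left H => ex_minn H
  | right _ => 0
  end.

Lemma dist_toP (U : cfg -> Prop) k (C D : cfg) : reach_in k C D -> U D ->
  dist_to U C <= k /\ exists2 D', reach_in (dist_to U C) C D' & U D'.
Proof.
move=> hCD hD; rewrite /dist_to; case: excluded_middle_informative => [H|H].
  case: (ex_minnP H) => m /pdecP [D' [hm hD']] min; split; last by exists D'.
  by apply: min; apply/pdecP; exists D.
by exfalso; apply: H; exists k; apply/pdecP; exists D.
Qed.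

Lemma dist_to_step (U : cfg -> Prop) (C : cfg) :
  (exists2 D, reach C D & U D) -> ~ U C ->
  exists t E, [/\ step C t E, exists2 D, reach E D & U D
                 & dist_to U E < dist_to U C].
Proof.
move=> [D /reachP [k hk] hD] hC; have [_ [D' hC' hD']] := dist_toP hk hD.
move: hC'; case: (dist_to U C) => [/= hCD'|m /= [E [[t hs] hE]]].
  by subst D'.
have [hm _] := dist_toP hE hD'.
by exists t, E; split => //; exists D' => //; apply/reachP; exists m.
Qed.

Lemma dist_to_certificate (S U : cfg -> Prop) :
  inductive S -> (forall C, S C -> ~ U C -> exists2 D, reach C D & U D) ->
  certificate S U (dist_to U).
Proof.
move=> indS reachU C hC hU.
have [t [E [hs _ hlt]]] := dist_to_step (reachU C hC hU) hU.
exists E; split => //; last by apply: indS hC _; exists t.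
by apply: rt_step; exists t.
Qed.

(* Every configuration can reach a bottom configuration B: every
   configuration reachable from B can reach B again.  Take a reachable
   configuration with the fewest reachable configurations. *)
Lemma reach_bottom (C : cfg) :
  exists2 B, reach C B & forall E, reach B E -> reach E B.
Proof.
set s := msize C.
pose succs (D : cfg) := [set x : {ffun Q -> 'I_s.+1} | pdec (reach D (decode x))].
have ex : exists k, pdec (exists2 D, reach C D & #|succs D| = k).
  by exists #|succs C|; apply/pdecP; exists C => //; apply: rt_refl.
case: (ex_minnP ex) => _ /pdecP [D hCD <-] min.
exists D => // E hDE; apply: NNPP => hED.
have : #|succs E| < #|succs D|.
  apply: proper_card; apply/properP; split.
    apply/subsetP => x; rewrite !inE => /pdecP h; apply/pdecP.
    exact: rt_trans hDE h.
  have sizeD : msize D = s by apply: reach_msize.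
  exists (encode s D); rewrite !inE decode_encode //.
    by apply/pdecP; apply: rt_refl.
  by apply/pdecP.
suff : #|succs D| <= #|succs E| by lia.
by apply: min; apply/pdecP; exists E => //; apply: rt_trans hCD hDE.
Qed.

End Reachability.

Section Runs.
Variables (n : nat) (P : replicated_system n).
Local Notation cfg := (conf (rs_Q P)).
Variable r : run P.

Lemma run_reach i j : i <= j -> reach (run_conf r i) (run_conf r j).
Proof.
move=> /subnK <-; elim: (j - i) => [|k IH]; first exact: rt_refl.
by apply: rt_trans IH (rt_step _ _ _ _ _); exists (run_trans r (k + i)); apply: run_steps.
Qed.

Lemma run_inductive (S : cfg -> Prop) i j :
  inductive S -> S (run_conf r i) -> i <= j -> S (run_conf r j).
Proof.
move=> indS hi /subnK <-; elim: (j - i) => [//|k IH].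
by apply: indS IH _; exists (run_trans r (k + i)); apply: run_steps.
Qed.

(* A run visits some configuration infinitely often: all its configurations
   have the same number of agents, hence range over a finite set. *)
Lemma run_recurrent : exists C, inf_often (fun i => run_conf r i = C).
Proof.
set s := msize (run_conf r 0).
have [x hx] := inf_often_value (fun i => encode s (run_conf r i)).
exists (decode x) => N; have [i [hi <-]] := hx N; exists i; split => //.
by rewrite decode_encode //; apply: reach_msize; apply: run_reach.
Qed.

Hypothesis fair_r : fair r.

Lemma fair_reach (C D : cfg) :
  inf_often (fun i => run_conf r i = C) -> reach C D ->
  inf_often (fun i => run_conf r i = D).
Proof.
move=> hC hCD; elim: hCD hC => [x y [t hs]|//|x y z _ h1 _ h2 hx].
  move=> hx N; have [i [hi [_ _ h]]] := fair_r hs hx N.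
  by exists i.+1; split => //; apply: leqW.
exact: h2 (h1 hx).
Qed.

(* A fair run that enters an inductive set S admitting a certificate for
   S ~> U eventually visits U: among the configurations visited infinitely
   often, one with minimal certificate value cannot lie in S \ U. *)
Lemma fair_escape (S U : cfg -> Prop) f t :
  inductive S -> S (run_conf r t) -> certificate S U f ->
  exists t', U (run_conf r t').
Proof.
move=> indS ht cert; apply: NNPP => never.
pose recurrent C := inf_often (fun i => run_conf r i = C).
have ex : exists k, pdec (exists2 C, recurrent C & f C = k).
  by have [C hC] := run_recurrent; exists (f C); apply/pdecP; exists C.
case: (ex_minnP ex) => _ /pdecP [C hC <-] min.
have [i [hi iC]] := hC t.
have SC : S C by rewrite -iC; apply: run_inductive ht hi.
have UC : ~ U C by move=> hU; apply: never; exists i; rewrite iC.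
have [D [hCD SD lt_fD]] := cert C SC UC.
suff : f C <= f D by rewrite leqNgt lt_fD.
by apply: min; apply/pdecP; exists D => //; apply: fair_reach hCD.
Qed.

End Runs.

Lemma acyclic_descendants_lt (m : nat) (E : 'I_m -> 'I_m -> Prop) i j :
  acyclic E -> E i j ->
  #|[set x | pdec (clos_trans _ E j x)]| < #|[set x | pdec (clos_trans _ E i x)]|.
Proof.
move=> acE hij; apply: proper_card; apply/properP; split.
  apply/subsetP => x; rewrite !inE => /pdecP h; apply/pdecP.
  exact: t_trans (t_step _ _ _ _ hij) h.
by exists j; rewrite !inE; apply/pdecP; [apply: t_step | apply: acE].
Qed.

(* A fair run
   in a non-terminal stage reaches a successor stage (fair_escape); by
   induction on the number of descendants it ends in a terminal stage, which
   it never leaves and which satisfies a postcondition. *)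
Lemma stage_graph_sound (n : nat) (P : replicated_system n)
    (Pi : stable_term_prop (rs_Q P)) (G : stage_graph n P) :
  is_stage_graph Pi G -> satisfies Pi.
Proof.
case=> acG indG covers certG termG r fair_r pre0.
pose stage := sg_stage n P G; pose edge := sg_edge n P G.
pose descendants i := #|[set x | pdec (clos_trans _ edge i x)]|.
suff stabilises k i t : descendants i < k -> stage i (run_conf r t) ->
    exists N, exists2 phi, List.In phi (phi_posts Pi) &
      forall m, N <= m -> psem phi (run_conf r m).
  by have [i0 hi0] := covers _ pre0; apply: (stabilises _ i0 0 (ltnSn _) hi0).
elim: k i t => [//|k IH] i t hk ht.
case: (classic (exists j, edge i j)) => [hedge|noedge].
  have [f cert] := certG i hedge.
  have [t' [j [hij hj]]] := fair_escape fair_r (indG i) ht cert.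
  by apply: (IH j t') => //; apply: leq_trans (acyclic_descendants_lt acG hij) hk.
have [phi hphi sat_phi] := termG i (fun j hij => noedge (ex_intro _ j hij)).
by exists t, phi => // m hm; apply: sat_phi; apply: run_inductive ht hm.
Qed.

(* A schedule proposes a
   target step S -t-> S' at each value c of a counter.  The scheduler walks
   along a shortest execution to S, fires t, and increments the counter; if
   S is unreachable it skips the target with a silent step. *)
Section FairScheduler.
Variables (n : nat) (P : replicated_system n).
Local Notation Q := (rs_Q P).
Local Notation cfg := (conf Q).

Definition target := (cfg * transition Q * cfg)%type.

Variable sched : nat -> option target.

Inductive move : cfg * nat -> transition Q * (cfg * nat) -> Prop :=
| MoveFire X c t X' : sched c = Some (X, t, X') -> step X t X' ->
    move (X, c) (t, (X', c.+1))
| MoveApproach X c S t0 S' t D : sched c = Some (S, t0, S') -> step S t0 S' ->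
    step X t D -> reach D S -> dist_to (eq S) D < dist_to (eq S) X ->
    move (X, c) (t, (D, c))
| MoveSkip X c :
    ~ (exists S t S', [/\ sched c = Some (S, t, S'), step S t S' & reach X S]) ->
    move (X, c) (silent P, (X, c.+1)).

Lemma move_total (st : cfg * nat) : exists res, move st res.
Proof.
case: st => X c.
case: (classic (exists S t S', [/\ sched c = Some (S, t, S'), step S t S' & reach X S]));
  last by move=> none; exists (silent P, (X, c.+1)); apply: MoveSkip.
move=> [S [t [S' [hsched hs hXS]]]].
case: (classic (S = X)) => [<-|hne]; first by exists (t, (S', c.+1)); apply: MoveFire.
have [t' [D [hXD [D' hDD' eSD'] hlt]]] := dist_to_step (ex_intro2 _ _ S hXS erefl) hne.
subst D'.
by exists (t', (D, c)); apply: MoveApproach hsched hs hXD hDD' hlt.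
Qed.

Lemma move_step st res : move st res -> step st.1 res.1 res.2.1.
Proof. by case=> // X c _; apply: silent_step. Qed.

Lemma move_counter st res : move st res ->
  res.2.2 = st.2.+1 \/
  exists S t S', [/\ sched st.2 = Some (S, t, S'), step S t S' & reach st.1 S].
Proof.
case=> [|X c S t0 S' t D hsched hs hXD hDS _|]; [by left|right|by left].
by exists S, t0, S'; split => //; apply: rt_trans (rt_step _ _ _ _ _) hDS; exists t.
Qed.

Lemma move_towards st res S t S' : move st res ->
  sched st.2 = Some (S, t, S') -> step S t S' -> reach st.1 S ->
  (st.1 = S /\ res = (t, (S', st.2.+1))) \/
  [/\ res.2.2 = st.2, reach res.2.1 S & dist_to (eq S) res.2.1 < dist_to (eq S) st.1].
Proof.
case=> [X c t1 X' -> _ [-> -> ->]|X c S0 t0 S0' t1 D -> _ _ hDS hlt [<- _ _]|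
        X c none hsched hs hXS];
  [by left|by right|].
by exfalso; apply: none; exists S, t, S'.
Qed.

Definition next (st : cfg * nat) : transition Q * (cfg * nat) :=
  proj1_sig (constructive_indefinite_description _ (move_total st)).

Lemma nextP st : move st (next st).
Proof. exact: proj2_sig (constructive_indefinite_description _ _). Qed.

Definition state (C0 : cfg) (i : nat) : cfg * nat :=
  iter i (fun st => (next st).2) (C0, 0).

Lemma state_step C0 i :
  step (state C0 i).1 (next (state C0 i)).1 (state C0 i.+1).1.
Proof. exact: move_step (nextP _). Qed.

Definition sched_run (C0 : cfg) : run P := Run (state_step C0).

Lemma sched_fires C0 i S t S' :
  sched (state C0 i).2 = Some (S, t, S') -> step S t S' -> reach (state C0 i).1 S ->
  exists i', [/\ i <= i', (state C0 i').1 = S, (next (state C0 i')).1 = t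
               & state C0 i'.+1 = (S', (state C0 i).2.+1)].
Proof.
have [k] : exists k, dist_to (eq S) (state C0 i).1 <= k.
  by exists (dist_to (eq S) (state C0 i).1).
elim: k i => [|k IH] i hk hsched hs hXS;
  case: (move_towards (nextP (state C0 i)) hsched hs hXS)
    => [[XS resE]|[same hDS hlt]]; try by exists i; rewrite /= resE.
- by rewrite leqn0 in hk; rewrite (eqP hk) in hlt.
- have [i' [hi' XS' t' next']] : exists i', [/\ i.+1 <= i', (state C0 i').1 = S,
      (next (state C0 i')).1 = t & state C0 i'.+1 = (S', (state C0 i.+1).2.+1)].
    by apply: IH => //; [rewrite -ltnS; apply: leq_trans hlt hk | rewrite /= same].
  by exists i'; split => //; [apply: ltnW | rewrite next' /= same].
Qed.

Lemma counter_reaches C0 i j : (state C0 i).2 <= j ->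
  exists2 i', i <= i' & (state C0 i').2 = j.
Proof.
move=> /subnKC <-; elim: (j - _) => [|m [i1 hi1 c1]]; first by exists i; rewrite ?addn0.
have [i2 [hi2 c2]] : exists i2, i1 < i2 /\ (state C0 i2).2 = (state C0 i1).2.+1.
  case: (move_counter (nextP (state C0 i1))) => [inc|[S [t [S' [hsched hs hXS]]]]].
    by exists i1.+1.
  have [i' [hi' _ _ next']] := sched_fires hsched hs hXS.
  by exists i'.+1; rewrite next'.
by exists i2; [lia | rewrite c2 c1 addnS].
Qed.

Hypothesis sched_repeats : forall x N, exists2 j, N <= j & sched j = Some x.

Lemma sched_run_fair C0 : fair (sched_run C0).
Proof.
move=> S t S' hs hinf N.
have [j hj hsched] := sched_repeats (S, t, S') (state C0 N).2.
have [i hNi cj] := counter_reaches hj.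
have [i'' [hi'' XS]] := hinf i.
have hXS : reach (state C0 i).1 S by rewrite -XS; apply: (run_reach (sched_run C0) hi'').
rewrite -cj in hsched.
have [i' [hi' XS' t' next']] := sched_fires hsched hs hXS.
exists i'; split; first lia.
by split; [exact: XS' | exact: t' | exact: (f_equal fst next')].
Qed.

End FairScheduler.

Lemma logn2_code a b : logn 2 (2 ^ a * (2 * b).+1) = a.
Proof.
rewrite lognM ?expn_gt0 // pfactorK // logn_coprime ?addn0 //.
by rewrite coprime2n /= oddM.
Qed.

Section Completeness.
Variables (n : nat) (P : replicated_system n).
Local Notation Q := (rs_Q P).
Local Notation cfg := (conf Q).

(* The schedule that first targets B and then proposes every step
   infinitely often: the step with code a at every index 2^a (2b+1) + 1. *)
Definition via_schedule (B : cfg) (j : nat) : option (target P) :=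
  if j is j'.+1 then unpickle (logn 2 j') else Some (B, silent P, B).

Lemma via_schedule_repeats B x N : exists2 j, N <= j & via_schedule B j = Some x.
Proof.
exists (2 ^ pickle x * (2 * N).+1).+1; last by rewrite /= logn2_code pickleK.
have := leq_pmull (2 * N).+1 (expn_gt0 2 (pickle x)); lia.
Qed.

Lemma fair_run_through (C0 B : cfg) : reach C0 B ->
  exists r : run P, [/\ fair r, run_conf r 0 = C0 & exists i, run_conf r i = B].
Proof.
move=> hC0B; exists (sched_run (via_schedule B) C0).
split; [exact: sched_run_fair (via_schedule_repeats B) C0 | by [] |].
have [i [_ XB _ _]] :=
  sched_fires (sched := via_schedule B) (i := 0) erefl (silent_step B) hC0B.
by exists i.
Qed.

Variable Pi : stable_term_prop Q.

Definition stable (phi : pform Q) (C : cfg) : Prop :=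
  forall E, reach C E -> psem phi E.

(* If P satisfies Pi, then from every configuration reachable from the
   precondition, a configuration stable for some postcondition is reachable:
   run fairly through a bottom configuration B; the run then visits every
   configuration reachable from B infinitely often. *)
Lemma satisfies_reach_stable (C0 C : cfg) : satisfies Pi ->
  psem (phi_pre Pi) C0 -> reach C0 C ->
  exists2 D, reach C D & exists2 phi, List.In phi (phi_posts Pi) & stable phi D.
Proof.
move=> sat pre0 hC0C.
have [B hCB bottom] := reach_bottom C.
have [r [fair_r r0 [i0 ri0]]] := fair_run_through (rt_trans _ _ _ _ _ hC0C hCB).
have visits E : reach B E -> inf_often (fun i => run_conf r i = E).
  move=> hBE; have [D hD] := run_recurrent r; have [i [hi iD]] := hD i0.
  apply: (fair_reach fair_r hD); apply: rt_trans (bottom D _) hBE.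
  by rewrite -ri0 -iD; apply: run_reach.
rewrite -r0 in pre0; have [N [phi hphi sat_phi]] := sat r fair_r pre0.
exists B => //; exists phi => // E hBE.
by have [i [hi <-]] := visits E hBE N; apply: sat_phi.
Qed.

(* The canonical stage graph: stage 0 holds the configurations reachable from
   the precondition, stage k+1 those among them stable for the k-th
   postcondition; the only edges go from stage 0 to the others. *)
Definition from_pre (C : cfg) : Prop :=
  exists2 C0, psem (phi_pre Pi) C0 & reach C0 C.

Definition canonical_stage (k : nat) (C : cfg) : Prop :=
  from_pre C /\
  if k is k'.+1 then stable (List.nth k' (phi_posts Pi) (PTrue _)) C else True.

Definition canonical_edge (m : nat) (i j : 'I_m) : Prop :=
  nat_of_ord i = 0 /\ nat_of_ord j <> 0.

(* Both reachability from the precondition and stability are inductive. *)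
Lemma canonical_stage_inductive k : inductive (canonical_stage k).
Proof.
move=> C C' [[C0 pre0 hC0C] hstable] hCC'; have hC' := rt_step _ _ _ _ hCC'.
split; first by exists C0 => //; apply: rt_trans hC0C hC'.
by case: k hstable => // k hstable E hC'E; apply: hstable; apply: rt_trans hC' hC'E.
Qed.

(* Paths have length one, since edges leave stage 0 and never enter it. *)
Lemma canonical_edge_acyclic m : acyclic (@canonical_edge m).
Proof.
move=> i; suff: forall j, clos_trans _ (@canonical_edge m) i j ->
    nat_of_ord i = 0 /\ nat_of_ord j <> 0 by move=> h /h [].
by move=> j; elim=> [//|x y z _ [-> _] _ [_ hz]].
Qed.

Lemma satisfies_stage_graph : satisfies Pi -> has_stage_graph Pi.
Proof.
move=> sat; case hposts: (phi_posts Pi) => [|phi0 posts].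
  (* Without postconditions no configuration satisfies the precondition,
     so the empty graph is a stage graph. *)
  exists (StageGraph n P 0 (fun _ _ => False) (fun _ _ => False)).
  split; try by case.
  move=> C0 pre0; have [D _ [phi]] := satisfies_reach_stable sat pre0 (rt_refl _ _ C0).
  by rewrite hposts.
set m := (length (phi_posts Pi)).+1.
have m_gt1 : 1 < m by rewrite /m hposts.
exists (StageGraph n P m (fun i => canonical_stage i) (@canonical_edge m)).
split => /=.
- exact: canonical_edge_acyclic.
- by move=> i; apply: canonical_stage_inductive.
- by move=> C pre0; exists ord0; split => //; exists C => //; apply: rt_refl.
- move=> i [_ [i0 _]]; rewrite i0.
  exists (dist_to (fun C => exists j, canonical_edge i j /\ canonical_stage j C)).
  apply: dist_to_certificate; first exact: canonical_stage_inductive.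
  move=> C [[C0 pre0 hC0C] _] _.
  have [D hCD [phi hphi stable_D]] := satisfies_reach_stable sat pre0 hC0C.
  have [k [/ltP hk nth_k]] := List.In_nth _ _ (PTrue _) hphi.
  exists D => //; exists (Ordinal (hk : k.+1 < m)); split => //=.
  split; first by exists C0 => //; apply: rt_trans hC0C hCD.
  by rewrite nth_k.
- case=> [[|k] hk] terminal.
    by exfalso; apply: (terminal (Ordinal m_gt1)).
  exists (List.nth k (phi_posts Pi) (PTrue _)); first by apply: List.nth_In; apply/ltP.
  by move=> C [_ stable_C]; apply: stable_C; apply: rt_refl.
Qed.

End Completeness.

Theorem proposition3 (n : nat) (P : replicated_system n)
    (Pi : stable_term_prop (rs_Q P)) :
  satisfies Pi <-> has_stage_graph Pi.
Proof.
split; first exact: satisfies_stage_graph.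
by case=> G; apply: stage_graph_sound.
Qed.
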